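(* Let $\Gamma$ be a finite graph. The graph obtained from $\Gamma$ by repeatedly performing twin reductions (in any order) until no pair of twins remains is unique up to isomorphism, independent of the chosen sequence of reductions.
   Context: Graphs are simple (no loops). Two distinct vertices $v,w$ are open twins if they have the same open neighbourhoods (sets of adjacent vertices), and closed twins if they have the same closed neighbourhoods (neighbourhood together with the vertex itself); they are twins if they are open or closed twins. A twin reduction step takes a pair of twins $v,w$ and merges them into a single vertex, i.e. deletes one of them. A graph is twin-free if it has no pair of twins. The resulting twin-free graph is called the cokernel of $\Gamma$. *)

From mathcomp Require Import all_boot.
Set Implicit Arguments. Unset Strict Implicit. Unset Printing Implicit Defensive.

(* Intermediate graphs obtained by
   deleting vertices are the induced subgraphs on a vertex set S : {set T}. *)

Definition simple_graph (T : finType) (e : rel T) : Prop :=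
  symmetric e /\ irreflexive e.

Definition open_twins (T : finType) (e : rel T) (S : {set T}) (v w : T) : bool :=
  [&& v \in S, w \in S, v != w & [forall u in S, e v u == e w u]].

Definition closed_twins (T : finType) (e : rel T) (S : {set T}) (v w : T) : bool :=
  [&& v \in S, w \in S, v != w &
      [forall u in S, (e v u || (u == v)) == (e w u || (u == w))]].

Definition twins (T : finType) (e : rel T) (S : {set T}) (v w : T) : bool :=
  open_twins e S v w || closed_twins e S v w.

Definition twin_free (T : finType) (e : rel T) (S : {set T}) : bool :=
  [forall v in S, forall w in S, ~~ twins e S v w].

Definition twin_step (T : finType) (e : rel T) (S S' : {set T}) : Prop :=
  exists v w, twins e S v w /\ S' = S :\ w.

Inductive twin_reduces (T : finType) (e : rel T) : {set T} -> {set T} -> Prop :=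
  | tr_refl S : twin_reduces e S S
  | tr_step S S' S'' : twin_step e S S' -> twin_reduces e S' S'' ->
                       twin_reduces e S S''.

Definition induced_iso (T : finType) (e : rel T) (A B : {set T}) : Prop :=
  exists f : {x : T | x \in A} -> {x : T | x \in B},
    bijective f /\ forall x y, e (sval x) (sval y) = e (sval (f x)) (sval (f y)).

From mathcomp Require Import all_boot perm.
Set Implicit Arguments. Unset Strict Implicit. Unset Printing Implicit Defensive.

(* Twin reduction is terminating and locally confluent up to isomorphism:
   two twin reductions of the same graph either give isomorphic graphs
   (swapping the twins v, w is an automorphism, mapping the graph minus v
   onto the graph minus w) or commute, because the twins of one step remain
   twins after the other step.  A Newman-style induction on the number of
   vertices, carried out up to isomorphism, then shows that all twin-free
   reducts are isomorphic. *)

Section TwinReduction.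
Variables (T : finType) (e : rel T).
Hypotheses (e_sym : symmetric e) (e_irr : irreflexive e).
Implicit Types (S A B : {set T}) (v w x : T).

Lemma twinsP S v w :
  reflect [/\ v \in S, w \in S, v != w &
             {in S, forall u, u != v -> u != w -> e v u = e w u}]
          (twins e S v w).
Proof.
apply: (iffP idP) => [|[vS wS vw nbh]].
  case/orP=> /and4P[vS wS vw /forallP nbh]; split=> // u uS uv uw;
    move: (nbh u); rewrite uS /=; first by move/eqP.
  by rewrite (negbTE uv) (negbTE uw) !orbF => /eqP.
have ewv : e w v = e v w by rewrite e_sym.
apply/orP; case evw: (e v w); [right | left]; apply/and4P; split=> //;
  apply/forallP=> u; apply/implyP=> uS;
  case: (eqVneq u v) => [->|uv]; rewrite ?e_irr ?ewv ?evw ?eqxx ?orbT //;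
  case: (eqVneq u w) => [->|uw]; rewrite ?e_irr ?evw ?eqxx ?orbT ?orbF ?nbh //.
Qed.

Lemma twins_sym S v w : twins e S v w -> twins e S w v.
Proof.
case/twinsP=> vS wS vw nbh; apply/twinsP; split; rewrite 1?eq_sym //.
by move=> u uS uw uv; rewrite nbh.
Qed.

Lemma twins_setD1 S v w x :
  twins e S v w -> x != v -> x != w -> twins e (S :\ x) v w.
Proof.
case/twinsP=> vS wS vw nbh xv xw; apply/twinsP.
by split=> //; [rewrite !inE eq_sym xv | rewrite !inE eq_sym xw |
  move=> u /setD1P[_ /nbh]].
Qed.

Lemma twin_freeP S : reflect (forall v w, ~~ twins e S v w) (twin_free e S).
Proof.
apply: (iffP forallP) => [tfS v w | noTwins v]; last first.
  by apply/implyP=> _; apply/forallP=> w; apply/implyP=> _; apply: noTwins.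
apply/negP=> /[dup] /twinsP[vS wS _ _].
by move: (tfS v); rewrite vS => /forallP/(_ w); rewrite wS /= => /negP.
Qed.

Lemma twin_free_reduces S A : twin_free e S -> twin_reduces e S A -> A = S.
Proof.
move=> /twin_freeP tfS rSA.
by case: rSA tfS => // S0 S1 A0 [v [w [vw _]]] _ /(_ v w)/negP.
Qed.

Lemma exists_twin_free_reduct S :
  exists A, twin_reduces e S A /\ twin_free e A.
Proof.
elim: {S}_.+1 {-2}S (ltnSn #|S|) => // n IH S leSn.
have [[v w] /= vw | noTwins] := pickP (fun vw : T * T => twins e S vw.1 vw.2).
  have [A [rA tfA]] : exists A, twin_reduces e (S :\ w) A /\ twin_free e A.
    apply: IH; have /twinsP[_ wS _ _] := vw.
    by rewrite -ltnS (leq_trans _ leSn) // (cardsD1 w S) wS.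
  by exists A; split=> //; apply: tr_step rA; exists v, w.
exists S; split; first exact: tr_refl.
by apply/twin_freeP=> v w; rewrite (noTwins (v, w)).
Qed.

Definition iso_on S S' (h h' : T -> T) : Prop :=
  [/\ {in S, forall x, h x \in S'}, {in S', forall y, h' y \in S},
      {in S, cancel h h'}, {in S', cancel h' h}
    & {in S &, forall x y, e (h x) (h y) = e x y}].

Definition isomorphic S S' : Prop := exists h h', iso_on S S' h h'.

Lemma isomorphic_refl S : isomorphic S S.
Proof. by exists id, id; split. Qed.

Lemma iso_on_sym S S' h h' : iso_on S S' h h' -> iso_on S' S h' h.
Proof.
case=> hS h'S' hK h'K hE; split=> // x y xS yS.
by rewrite -hE ?h'K ?h'S'.
Qed.

Lemma isomorphic_trans S1 S2 S3 :
  isomorphic S1 S2 -> isomorphic S2 S3 -> isomorphic S1 S3.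
Proof.
case=> h [h' [hS h'S hK h'K hE]] [g [g' [gS g'S gK g'K gE]]].
exists (g \o h), (h' \o g'); split=> /=.
- by move=> x /hS/gS.
- by move=> x /g'S/h'S.
- by move=> x xS; rewrite gK ?hK ?hS.
- by move=> x xS; rewrite h'K ?g'K ?g'S.
- by move=> x y xS yS; rewrite gE ?hE ?hS.
Qed.

Lemma twins_iso_on S S' h h' v w :
  iso_on S S' h h' -> twins e S v w -> twins e S' (h v) (h w).
Proof.
case=> hS h'S hK h'K hE /twinsP[vS wS vw nbh]; apply/twinsP.
split; rewrite ?hS ?(inj_in_eq (can_in_inj hK)) // => u uS.
have h'uS := h'S u uS.
by rewrite -(h'K u uS) !(inj_in_eq (can_in_inj hK)) // => uv uw; rewrite !hE ?nbh.
Qed.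

Lemma iso_on_setD1 S S' h h' w :
  iso_on S S' h h' -> w \in S -> iso_on (S :\ w) (S' :\ h w) h h'.
Proof.
case=> hS h'S hK h'K hE wS; split.
- move=> x /setD1P[xw xS]; rewrite !inE hS //.
  by rewrite (inj_in_eq (can_in_inj hK)) ?xw.
- move=> y /setD1P[yw yS]; rewrite !inE h'S // andbT.
  by apply: contra yw => /eqP <-; rewrite h'K.
- by move=> x /setD1P[_ /hK].
- by move=> y /setD1P[_ /h'K].
- by move=> x y /setD1P[_ xS] /setD1P[_ yS]; apply: hE.
Qed.

Lemma twins_iso_on_tperm S v w :
  twins e S v w -> iso_on S S (tperm v w) (tperm v w).
Proof.
case/twinsP=> vS wS vw nbh; have tK := tpermK v w.
have tS x : x \in S -> tperm v w x \in S by case: tpermP.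
split=> [||x _|x _|x y xS yS]; rewrite ?tK //.
have nbhN u : u \in S -> u != v -> u != w -> e u v = e u w.
  by move=> uS uv uw; rewrite e_sym nbh // e_sym.
case: tpermP => [->|->|/eqP xv /eqP xw]; case: tpermP => [->|->|/eqP yv /eqP yw];
  first [exact: e_sym | by rewrite ?e_irr ?nbh ?nbhN].
Qed.

Lemma twins_setD1_isomorphic S v w :
  twins e S v w -> isomorphic (S :\ v) (S :\ w).
Proof.
move=> /[dup] /twinsP[vS _ _ _] /twins_iso_on_tperm tF.
by exists (tperm v w), (tperm v w); rewrite -{1}(tpermL v w); apply: iso_on_setD1.
Qed.

Lemma iso_on_twin_free S S' h h' :
  iso_on S S' h h' -> twin_free e S -> twin_free e S'.
Proof.
move=> /iso_on_sym hF /twin_freeP tfS; apply/twin_freeP=> v w.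
exact: contra (twins_iso_on hF) (tfS _ _).
Qed.

Lemma twin_steps_confluent S v1 w1 v2 w2 :
  twins e S v1 w1 -> twins e S v2 w2 ->
  isomorphic (S :\ w1) (S :\ w2) \/
  twins e (S :\ w1) v2 w2 /\ twins e (S :\ w2) v1 w1.
Proof.
move=> tw1 tw2; have [<-|w12] := eqVneq w1 w2.
  by left; apply: isomorphic_refl.
have [tw12|ntw12] := boolP (twins e S w1 w2).
  by left; apply: twins_setD1_isomorphic.
have w1v2 : w1 != v2 by apply: contraNneq ntw12 => ->.
have w2v1 : w2 != v1 by apply: contraNneq ntw12 => ->; apply: twins_sym.
by right; split; apply: twins_setD1; rewrite // eq_sym.
Qed.

Lemma isomorphic_twin_free_reducts S S' A B :
  isomorphic S S' -> twin_reduces e S A -> twin_free e A ->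
  twin_reduces e S' B -> twin_free e B -> isomorphic A B.
Proof.
elim: {S'}_.+1 {-2}S' (ltnSn #|S'|) S A B => // n IH S' leS'n S A B [h [h' hF]].
move=> rA tfA rB tfB.
case: rA hF tfA => [{}S | {}S _ {}A [v1 [w1 [tw1 ->]]] rA] hF tfA.
  by rewrite (twin_free_reduces (iso_on_twin_free hF tfA) rB); exists h, h'.
case: rB leS'n hF tfB => [{}S' | {}S' _ {}B [v2 [w2 [tw2 ->]]] rB] leS'n hF tfB.
  by have /twin_freeP/(_ v1 w1)/negP := iso_on_twin_free (iso_on_sym hF) tfB.
have htw1 := twins_iso_on hF tw1.
have [/twinsP[_ hw1S _ _] /twinsP[_ w2S _ _]] := conj htw1 tw2.
have iso1 : isomorphic (S :\ w1) (S' :\ h w1).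
  by exists h, h'; apply: iso_on_setD1 => //; case/twinsP: tw1.
have ltn_setD1 x : x \in S' -> #|S' :\ x| < n.
  by move=> xS'; rewrite -ltnS (leq_trans _ leS'n) // (cardsD1 x S') xS'.
have [iso12 | [tw2D tw1D]] := twin_steps_confluent htw1 tw2.
  exact: IH (ltn_setD1 _ w2S) _ _ _ (isomorphic_trans iso1 iso12) rA tfA rB tfB.
have [D [rD tfD]] := exists_twin_free_reduct (S' :\ h w1 :\ w2).
apply: isomorphic_trans (IH _ (ltn_setD1 _ hw1S) _ _ D iso1 rA tfA _ tfD) _.
  by apply: tr_step rD; exists v2, w2.
apply: IH (ltn_setD1 _ w2S) _ _ _ (isomorphic_refl _) _ tfD rB tfB.
by apply: tr_step rD; exists (h v1), (h w1); rewrite !setDDl setUC.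
Qed.

Lemma isomorphic_induced_iso A B : isomorphic A B -> induced_iso e A B.
Proof.
case=> h [h' [hA h'B hK h'K hE]].
pose f (a : {a | a \in A}) : {b | b \in B} :=
  exist _ (h (sval a)) (hA _ (svalP a)).
pose g (b : {b | b \in B}) : {a | a \in A} :=
  exist _ (h' (sval b)) (h'B _ (svalP b)).
exists f; split.
  exists g => [a|b]; apply: val_inj.
    exact: hK (svalP a).
  exact: h'K (svalP b).
by move=> a b /=; rewrite hE // (svalP a, svalP b).
Qed.

End TwinReduction.

Theorem mainTheorem15 (T : finType) (e : rel T) :
  simple_graph e ->
  forall A B : {set T},
    twin_reduces e [set: T] A -> twin_free e A ->
    twin_reduces e [set: T] B -> twin_free e B ->
    induced_iso e A B.
Proof.
move=> [e_sym e_irr] A B rA tfA rB tfB; apply: isomorphic_induced_iso.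
exact: (isomorphic_twin_free_reducts e_sym e_irr (isomorphic_refl e _)
          rA tfA rB tfB).
Qed.
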